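(* Let $q_1=(1,1,1)$, $q_2=(-1,-1,1)$, $q_3=(-1,1,-1)$, $q_4=(1,-1,-1)$ be the vertices of a regular tetrahedron in $\mathbb{R}^3$, let $t\in(0,1)$, and let $q_{j+4}=tq_j$ for $j=1,\dots,4$. Suppose that positive masses $m_1,\dots,m_8$ placed at $q_1,\dots,q_8$ form a central configuration. Then $m_1=m_2=m_3=m_4$ and $m_5=m_6=m_7=m_8$.
   Context: A configuration $q=(q_1,\dots,q_N)$ of distinct points in $\mathbb{R}^3$ with masses $m_1,\dots,m_N$ is a central configuration if there exists $c\in\mathbb{R}$ such that $\sum_{j\neq i} m_j\left(\frac{1}{|q_j-q_i|^3}-c\right)(q_j-q_i)=0$ for all $i=1,\dots,N$. *)

From Stdlib Require Import Reals Lra List.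
Open Scope R_scope.

Definition vec3 : Type := (R * R * R)%type.

Definition vx (v : vec3) : R := fst (fst v).
Definition vy (v : vec3) : R := snd (fst v).
Definition vz (v : vec3) : R := snd v.

Definition vsub (a b : vec3) : vec3 := (vx a - vx b, vy a - vy b, vz a - vz b).
Definition vscale (c : R) (a : vec3) : vec3 := (c * vx a, c * vy a, c * vz a).
Definition vnorm (a : vec3) : R := sqrt (vx a ^ 2 + vy a ^ 2 + vz a ^ 2).

Definition sum_except (N i : nat) (f : nat -> R) : R :=
  fold_right Rplus 0 (map (fun j => if Nat.eqb j i then 0 else f j) (seq 0 N)).

Definition central_configuration (N : nat) (q : nat -> vec3) (m : nat -> R) : Prop :=
  (forall i j, (i < N)%nat -> (j < N)%nat -> i <> j -> q i <> q j) /\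
  exists c : R, forall i, (i < N)%nat ->
    let term (proj : vec3 -> R) :=
      sum_except N i (fun j =>
        m j * (1 / (vnorm (vsub (q j) (q i))) ^ 3 - c) * proj (vsub (q j) (q i))) in
    term vx = 0 /\ term vy = 0 /\ term vz = 0.

(* The configuration of the statement (0-based: index k stands for q_{k+1}). *)
Definition tet_config (t : R) (k : nat) : vec3 :=
  match k with
  | 0%nat => (1, 1, 1)
  | 1%nat => (-1, -1, 1)
  | 2%nat => (-1, 1, -1)
  | 3%nat => (1, -1, -1)
  | 4%nat => (t, t, t)
  | 5%nat => (-t, -t, t)
  | 6%nat => (-t, t, -t)
  | _ => (t, -t, -t)
  end.

(* Let a, b, e, g be the values of 1/|q_i - q_j|^3 - c on pairs of outer vertices,
   radial pairs (q_k, t q_k), other mixed pairs and pairs of inner vertices.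
   Project the equation of body q_k (resp. t q_k) onto a vertex q_l, l <> k.
   Since q_j . q_l = -1 for j <> l and the q_j sum to zero, every term of the
   projection is independent of k except (1 - t)(b - e) m_{k+4} (resp.
   -(1 - t)(b - e) m_k).  Comparing two choices of k with the same l gives
   (1 - t)(b - e)(m_k - m_k') = 0, and b > e because a radial pair is strictly
   closer than a mixed one. *)

From Stdlib Require Import Reals Lra Lia List.
Open Scope R_scope.

Definition vdot (u v : vec3) : R := vx u * vx v + vy u * vy v + vz u * vz v.

Definition force_along (N : nat) (q : nat -> vec3) (m : nat -> R)
    (coef : nat -> nat -> R) (i : nat) (d : vec3) : R :=
  sum_except N i (fun j => m j * coef i j * vdot (vsub (q j) (q i)) d).

Lemma sum_except_ext N i f g :
  (forall j, (j < N)%nat -> j <> i -> f j = g j) ->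
  sum_except N i f = sum_except N i g.
Proof.
  intros Hfg; unfold sum_except; f_equal; apply map_ext_in.
  intros j Hj; apply in_seq in Hj.
  destruct (Nat.eqb_spec j i); [reflexivity | apply Hfg; lia].
Qed.

Lemma sum_except_lincomb N i f g h x y z :
  x * sum_except N i f + y * sum_except N i g + z * sum_except N i h =
  sum_except N i (fun j => x * f j + y * g j + z * h j).
Proof.
  unfold sum_except; induction (seq 0 N) as [|j s IH]; simpl; [ring|].
  destruct (Nat.eqb j i); rewrite <- IH; ring.
Qed.

Lemma central_configuration_force_along N q m :
  central_configuration N q m ->
  exists c, forall i d, (i < N)%nat ->
    force_along N q m (fun i j => 1 / vnorm (vsub (q j) (q i)) ^ 3 - c) i d = 0.
Proof.
  intros [_ [c Hc]]; exists c; intros i d Hi.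
  pose proof (Hc i Hi) as Hi_eq; cbv zeta in Hi_eq.
  destruct Hi_eq as (Hx & Hy & Hz).
  pose proof (f_equal2 Rplus (f_equal2 Rplus (f_equal (Rmult (vx d)) Hx)
    (f_equal (Rmult (vy d)) Hy)) (f_equal (Rmult (vz d)) Hz)) as Hd.
  rewrite sum_except_lincomb, !Rmult_0_r, !Rplus_0_r in Hd.
  rewrite <- Hd; unfold force_along; apply sum_except_ext.
  intros j _ _; unfold vdot; ring.
Qed.

Lemma inv_cube_sqrt_lt x y : 0 < x < y -> 1 / sqrt y ^ 3 < 1 / sqrt x ^ 3.
Proof.
  intros [Hx Hxy].
  assert (Hsx : 0 < sqrt x) by (apply sqrt_lt_R0; lra).
  assert (Hsxy : sqrt x < sqrt y) by (apply sqrt_lt_1; lra).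
  assert (Hcube : sqrt x ^ 3 < sqrt y ^ 3).
  { set (u := sqrt x) in *; set (v := sqrt y) in *.
    assert (0 < (v - u) * (v ^ 2 + u * v + u ^ 2)) by (apply Rmult_lt_0_compat; nra).
    nra. }
  unfold Rdiv; rewrite !Rmult_1_l.
  apply Rinv_lt_contravar; [apply Rmult_lt_0_compat; apply pow_lt|]; lra.
Qed.

(* Indices 0-3 are the outer vertices, 4-7 the inner ones; i and j form a
   radial pair when they agree mod 4. *)
Definition pair_coef (a b e g : R) (i j : nat) : R :=
  match Nat.ltb i 4, Nat.ltb j 4 with
  | true, true => a
  | false, false => g
  | _, _ => if Nat.eqb (i mod 4) (j mod 4) then b else e
  end.

Lemma tet_config_pair_coef t c i j :
  (i < 8)%nat -> (j < 8)%nat -> i <> j ->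
  1 / vnorm (vsub (tet_config t j) (tet_config t i)) ^ 3 - c =
  pair_coef (1 / sqrt 8 ^ 3 - c) (1 / sqrt (3 * (1 - t) ^ 2) ^ 3 - c)
    (1 / sqrt (3 + 2 * t + 3 * t ^ 2) ^ 3 - c) (1 / sqrt (8 * t ^ 2) ^ 3 - c) i j.
Proof.
  intros Hi Hj Hij.
  destruct i as [|[|[|[|[|[|[|[|i]]]]]]]]; try lia;
  destruct j as [|[|[|[|[|[|[|[|j]]]]]]]]; try lia;
  cbv [pair_coef tet_config vsub vx vy vz vnorm fst snd Nat.ltb Nat.leb Nat.eqb
       Nat.modulo Nat.divmod Nat.sub];
  match goal with |- 1 / sqrt ?X ^ 3 - c = 1 / sqrt ?Y ^ 3 - c =>
    replace X with Y by ring end; reflexivity.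
Qed.

Section TetrahedralForces.

Variables (t a b e g : R) (m : nat -> R).

Let F := force_along 8 (tet_config t) m (pair_coef a b e g).

Lemma outer_force_along_vertex k l :
  (k < 4)%nat -> (l < 4)%nat -> k <> l ->
  F k (tet_config t l) =
  4 * a * m l + 4 * t * e * m (l + 4)%nat + (1 - t) * (b - e) * m (k + 4)%nat
  + (1 - t) * e * (m 4%nat + m 5%nat + m 6%nat + m 7%nat).
Proof.
  intros Hk Hl Hkl; unfold F.
  destruct k as [|[|[|[|k]]]]; try lia;
  destruct l as [|[|[|[|l]]]]; try lia;
  cbv [force_along sum_except pair_coef tet_config vdot vsub vx vy vz fst snd
       seq map fold_right Nat.ltb Nat.leb Nat.eqb Nat.modulo Nat.divmod Nat.sub Nat.add];
  ring.
Qed.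

Lemma inner_force_along_vertex k l :
  (k < 4)%nat -> (l < 4)%nat -> k <> l ->
  F (k + 4) (tet_config t l) =
  4 * e * m l + 4 * t * g * m (l + 4)%nat - (1 - t) * (b - e) * m k
  - (1 - t) * e * (m 0%nat + m 1%nat + m 2%nat + m 3%nat).
Proof.
  intros Hk Hl Hkl; unfold F.
  destruct k as [|[|[|[|k]]]]; try lia;
  destruct l as [|[|[|[|l]]]]; try lia;
  cbv [force_along sum_except pair_coef tet_config vdot vsub vx vy vz fst snd
       seq map fold_right Nat.ltb Nat.leb Nat.eqb Nat.modulo Nat.divmod Nat.sub Nat.add];
  ring.
Qed.

Hypothesis radial_ne_cross : (1 - t) * (b - e) <> 0.
Hypothesis balanced : forall i d, (i < 8)%nat -> F i d = 0.

Lemma inner_masses_equal k k' l :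
  (k < 4)%nat -> (k' < 4)%nat -> (l < 4)%nat -> k <> l -> k' <> l ->
  m (k + 4)%nat = m (k' + 4)%nat.
Proof.
  intros Hk Hk' Hl Hkl Hk'l.
  pose proof (outer_force_along_vertex k l Hk Hl Hkl) as Hfk.
  pose proof (outer_force_along_vertex k' l Hk' Hl Hk'l) as Hfk'.
  rewrite balanced in Hfk, Hfk' by lia.
  assert (Hdiff : (1 - t) * (b - e) * (m (k + 4)%nat - m (k' + 4)%nat) = 0) by lra.
  apply Rmult_integral in Hdiff as [|]; [contradiction | lra].
Qed.

Lemma outer_masses_equal k k' l :
  (k < 4)%nat -> (k' < 4)%nat -> (l < 4)%nat -> k <> l -> k' <> l ->
  m k = m k'.
Proof.
  intros Hk Hk' Hl Hkl Hk'l.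
  pose proof (inner_force_along_vertex k l Hk Hl Hkl) as Hfk.
  pose proof (inner_force_along_vertex k' l Hk' Hl Hk'l) as Hfk'.
  rewrite balanced in Hfk, Hfk' by lia.
  assert (Hdiff : (1 - t) * (b - e) * (m k - m k') = 0) by lra.
  apply Rmult_integral in Hdiff as [|]; [contradiction | lra].
Qed.

Lemma layer_masses_equal :
  m 0%nat = m 1%nat /\ m 1%nat = m 2%nat /\ m 2%nat = m 3%nat /\
  m 4%nat = m 5%nat /\ m 5%nat = m 6%nat /\ m 6%nat = m 7%nat.
Proof.
  repeat split;
    [ apply (outer_masses_equal 0 1 3) | apply (outer_masses_equal 1 2 0)
    | apply (outer_masses_equal 2 3 0) | apply (inner_masses_equal 0 1 3)
    | apply (inner_masses_equal 1 2 0) | apply (inner_masses_equal 2 3 0) ]; lia.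
Qed.

End TetrahedralForces.

Theorem theorem7 (t : R) (m : nat -> R) :
  0 < t < 1 ->
  (forall k, (k < 8)%nat -> 0 < m k) ->
  central_configuration 8 (tet_config t) m ->
  m 0%nat = m 1%nat /\ m 1%nat = m 2%nat /\ m 2%nat = m 3%nat /\
  m 4%nat = m 5%nat /\ m 5%nat = m 6%nat /\ m 6%nat = m 7%nat.
Proof.
  intros Ht _ Hcc.
  destruct (central_configuration_force_along _ _ _ Hcc) as [c Hc].
  set (b := 1 / sqrt (3 * (1 - t) ^ 2) ^ 3 - c).
  set (e := 1 / sqrt (3 + 2 * t + 3 * t ^ 2) ^ 3 - c).
  apply (layer_masses_equal t (1 / sqrt 8 ^ 3 - c) b e (1 / sqrt (8 * t ^ 2) ^ 3 - c)).
  - assert (e < b) by (apply Rplus_lt_compat_r, inv_cube_sqrt_lt; nra).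
    apply Rmult_integral_contrapositive_currified; lra.
  - intros i d Hi; rewrite <- (Hc i d Hi).
    apply sum_except_ext; intros j Hj Hji.
    rewrite tet_config_pair_coef by lia; reflexivity.
Qed.
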